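(* Let $\mathcal R$ be a measure-preserving equivalence relation on a standard probability space $(X,\mu)$ and suppose there is $n\in\mathbb N$ such that every $\mathcal R$-class has cardinality at most $n$. Then the full group $[\mathcal R]$ is locally finite.
   Context: Null sets are ignored. $[\mathcal R]$ is the group of measure-preserving transformations $T$ of $X$ with $(x,T(x))\in\mathcal R$ for all $x$. A group is locally finite if every finitely generated subgroup is finite. *)

From HB Require Import structures.
From mathcomp Require Import all_boot all_order all_algebra.
From mathcomp Require Import all_classical all_reals all_analysis.
Set Implicit Arguments. Unset Strict Implicit. Unset Printing Implicit Defensive.
Import Order.TTheory GRing.Theory Num.Theory.
Local Open Scope classical_set_scope.
Local Open Scope ring_scope.

(* Standard Borel space: Borel-isomorphic to a Borel subset of the Polish space R
   (Kuratowski); f is an injective measurable map with measurable images of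
   measurable sets. *)
Definition standard_borel (d : measure_display) (X : measurableType d)
  (R : realType) : Prop :=
  exists f : X -> R, [/\ injective f, measurable_fun setT f &
    forall A : set X, measurable A -> measurable (f @` A)].

Definition equiv_rel (X : Type) (E : set (X * X)) : Prop :=
  [/\ forall x, E (x, x),
      forall x y, E (x, y) -> E (y, x) &
      forall x y z, E (x, y) -> E (y, z) -> E (x, z)].

Definition borel_automorphism (d : measure_display) (X : measurableType d)
  (T : X -> X) : Prop :=
  measurable_fun setT T /\
  exists U : X -> X, [/\ cancel T U, cancel U T & measurable_fun setT U].

Definition preserves (d : measure_display) (X : measurableType d)
  (R : realType) (mu : probability X R) (T : X -> X) : Prop :=
  forall A : set X, measurable A -> mu (T @^-1` A) = mu A.

Definition mp_equiv_rel (d : measure_display) (X : measurableType d)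
  (R : realType) (mu : probability X R) (E : set (X * X)) : Prop :=
  [/\ equiv_rel E, measurable E &
      forall T : X -> X, borel_automorphism T -> (forall x, E (x, T x)) ->
        preserves mu T].

Definition full_group (d : measure_display) (X : measurableType d)
  (R : realType) (mu : probability X R) (E : set (X * X)) (T : X -> X) : Prop :=
  [/\ borel_automorphism T, preserves mu T & forall x, E (x, T x)].

Inductive gen (X : Type) (S : set (X -> X)) : (X -> X) -> Prop :=
| gen_id : gen S id
| gen_base T : S T -> gen S T
| gen_inv T U : gen S T -> cancel T U -> cancel U T -> gen S U
| gen_comp T U : gen S T -> gen S U -> gen S (T \o U).

(* Local finiteness of [E], where elements are identified mod null sets:
   for every finite family of elements of [E], the subgroup they generate
   has finitely many elements up to mu-a.e. equality. *)
Definition full_group_locally_finite (d : measure_display)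
  (X : measurableType d) (R : realType) (mu : probability X R)
  (E : set (X * X)) : Prop :=
  forall (k : nat) (gens : 'I_k -> X -> X),
    (forall i, full_group mu E (gens i)) ->
    exists (m : nat) (F : 'I_m -> X -> X),
      forall g, gen (range gens) g ->
        exists j : 'I_m, {ae mu, forall x, g x = F j x}.

From HB Require Import structures.
From mathcomp Require Import all_boot all_order all_algebra.
From mathcomp Require Import all_classical all_reals all_analysis.
Local Open Scope classical_set_scope.
Local Open Scope ring_scope.
Set Implicit Arguments.
Unset Strict Implicit.

(* Enumerate every class by [c x : 'I_n -> X].  The type of a point [x]
   records which index enumerates [x] itself, how each generator permutes the
   indices of [c x], and which indices of [c x] name the same point; it ranges
   over a finite type.  Every element [g] of the generated group acts on the
   indices of [c x] by a map depending only on the type of [x], so [g] is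
   determined everywhere by a function from types to indices: there are only
   finitely many such [g]. *)

Section ClassCoding.
Variables (X : Type) (E : set (X * X)).
Hypothesis Erefl : forall x, E (x, x).
Hypothesis Esym : forall x y, E (x, y) -> E (y, x).
Hypothesis Etrans : forall x y z, E (x, y) -> E (y, z) -> E (x, z).
Variable n : nat.

Lemma class_enumeration :
  (forall x, exists c : 'I_n -> X, forall y, E (x, y) -> exists i, y = c i) ->
  exists c : X -> 'I_n -> X,
    (forall x a, E (x, c x a)) /\ (forall x y, E (x, y) -> exists a, c x a = y).
Proof.
move=> /choice[c0 c0_cov].
exists (fun x a => if `[< E (x, c0 x a) >] then c0 x a else x); split.
  by move=> x a /=; case: asboolP.
move=> x y Exy; have [a ya] := c0_cov x y Exy; exists a.
by rewrite /= -ya; case: asboolP.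
Qed.

Variable c : X -> 'I_n -> X.
Hypothesis c_in : forall x a, E (x, c x a).
Hypothesis c_cov : forall x y, E (x, y) -> exists a, c x a = y.

Definition class_preserving (g : X -> X) := forall y, E (y, g y).

Lemma class_index_map g : class_preserving g ->
  exists t : X -> 'I_n -> 'I_n, forall x a, g (c x a) = c x (t x a).
Proof.
move=> g_E.
have index_of x a : exists b, g (c x a) = c x b.
  by have [b <-] := c_cov (Etrans (c_in x a) (g_E _)); exists b.
by exists (fun x => projT1 (choice (index_of x))) => x; case: choice.
Qed.

Variables (T : finType) (tau : X -> T).
Variables (self : T -> 'I_n) (same : T -> 'I_n -> 'I_n -> bool).
Hypothesis tau_self : forall x, c x (self (tau x)) = x.
Hypothesis tau_same : forall x a b, reflect (c x a = c x b) (same (tau x) a b).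

Definition coded (g : X -> X) :=
  exists H : T -> 'I_n -> 'I_n, forall x a, g (c x a) = c x (H (tau x) a).

Lemma coded_id : coded id.
Proof. by exists (fun _ a => a). Qed.

Lemma coded_comp g h : coded g -> coded h -> coded (g \o h).
Proof.
by move=> [G gG] [H hH]; exists (fun t a => G t (H t a)) => x a /=; rewrite hH gG.
Qed.

(* [g'] sends [c x a] to any [c x b] with [g (c x b) = c x a]; such a [b]
   exists because [g'] preserves classes, and it can be found from the type
   of [x] because the type records the coincidences in [c x]. *)
Lemma coded_inv g g' : class_preserving g' -> cancel g g' -> cancel g' g ->
  coded g -> coded g'.
Proof.
move=> g'_E gK g'K [G gG].
exists (fun t a => if [pick b | same t (G t b) a] is Some b then b else a).
move=> x a; case: pickP => [b /= /tau_same <- | no_b]; first by rewrite -gG gK.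
have [b cb] := c_cov (Etrans (c_in x a) (g'_E _)).
by have /tau_same[] := no_b b; rewrite -gG cb g'K.
Qed.

Lemma gen_coded (S : set (X -> X)) :
  (forall g, S g -> class_preserving g /\ coded g) ->
  forall g, gen S g -> class_preserving g /\ coded g.
Proof.
move=> S_coded g; elim=> {g}.
- by split; [exact: Erefl | exact: coded_id].
- exact: S_coded.
- move=> g g' _ [g_E g_coded] gK g'K.
  have g'_E : class_preserving g'.
    by move=> y; apply: Esym; have := g_E (g' y); rewrite g'K.
  by split; last exact: coded_inv g_coded.
- move=> g h _ [g_E g_coded] _ [h_E h_coded]; split.
    by move=> y; exact: Etrans (h_E y) (g_E (h y)).
  exact: coded_comp.
Qed.

Lemma coded_finite : exists (m : nat) (F : 'I_m -> X -> X),
  forall g, coded g -> exists j, g = F j.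
Proof.
pose codes := {ffun T -> 'I_n}.
exists #|codes|, (fun j x => c x (@enum_val codes codes j (tau x))) => g [H gH].
exists (@enum_rank codes [ffun t => H t (self t)]); apply/funext => x.
by rewrite (@enum_rankK codes) ffunE -gH tau_self.
Qed.

End ClassCoding.

Theorem mainTheorem9 (d : measure_display) (X : measurableType d)
  (R : realType) (mu : probability X R) (E : set (X * X)) (n : nat) :
  standard_borel X R ->
  mp_equiv_rel mu E ->
  (forall x : X, exists c : 'I_n -> X, forall y, E (x, y) -> exists i, y = c i) ->
  full_group_locally_finite mu E.
Proof.
move=> _ [[Erefl Esym Etrans] _ _] /(class_enumeration Erefl)[c [c_in c_cov]].
move=> k gens gens_full.
have gens_E i : class_preserving E (gens i) by case: (gens_full i).
have /choice[tab tabP] := fun i => class_index_map Etrans c_in c_cov (gens_E i).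
have /choice[pos posP] := fun x => c_cov x x (Erefl x).
pose T := ('I_n * {ffun 'I_k -> {ffun 'I_n -> 'I_n}}
            * {ffun 'I_n -> {ffun 'I_n -> bool}})%type.
pose tau x : T := (pos x, [ffun i => [ffun a => tab i x a]],
               [ffun a => [ffun b => `[< c x a = c x b >]]]).
have tau_same x a b : reflect (c x a = c x b) ((tau x).2 a b).
  by rewrite !ffunE; apply: asboolP.
have gens_coded g : range gens g -> class_preserving E g /\ coded c tau g.
  move=> [i _ <-]; split=> //.
  by exists (fun (t : T) a => t.1.2 i a) => x a; rewrite !ffunE tabP.
have [m [F F_all]] := coded_finite (tau := tau) (self := fun t : T => t.1.1) posP.
exists m, F => g gen_g.
have [_ g_coded] := gen_coded Erefl Esym Etrans c_in c_cov
  (same := fun (t : T) a b => t.2 a b) tau_same gens_coded gen_g.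
by have [j ->] := F_all g g_coded; exists j; apply: aeW.
Qed.
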